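(* Let $N\ge2$ and let $M$ be the Riemannian model with pole $o$ and metric $dr^2+\psi^2(r)d\omega^2$, with $\psi$ smooth, positive on $(0,\infty)$, $\psi(0)=\psi''(0)=0$, $\psi'(0)=1$. Let $\alpha\in\mathbb{R}$ and $\Phi(r)=\left(\frac{\psi(r)}{r}\right)^\alpha$. Then on $M\setminus\{o\}$, $$-\Delta_g\Phi-\alpha\left[K^{rad}_{\pi,r}+(\alpha-2+N)H^{tan}_{\pi,r}\right]\Phi=-\alpha(\alpha-2+N)\frac{\Phi}{\psi^2}-\frac{\alpha(\alpha+1)}{r^2}\Phi+\frac{2\alpha^2+\alpha(N-1)}{r}\frac{\psi'}{\psi}\Phi.$$ Hence $\Phi(r)=\left(\frac{r}{\psi(r)}\right)^{\frac{N-1}{2}}$ satisfies $$-\Delta_g\Phi+\frac{(N-1)}{4}\left[2K^{rad}_{\pi,r}+(N-3)H^{tan}_{\pi,r}\right]\Phi=\frac{(N-1)(N-3)}{4}\Phi\left(\frac{1}{\psi^2}-\frac{1}{r^2}\right).$$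
   Context: $r$ is the distance from the pole, $d\omega^2$ the round metric of $\mathbb{S}^{N-1}$; for radial functions $\Delta_g\Phi=\Phi''+(N-1)\frac{\psi'}{\psi}\Phi'$. $K^{rad}_{\pi,r}=-\psi''/\psi$ and $H^{tan}_{\pi,r}=-(\psi'^2-1)/\psi^2$. *)

From Stdlib Require Import Reals.
From Coquelicot Require Import Coquelicot.
Open Scope R_scope.

Definition smooth (f : R -> R) : Prop := forall (n : nat) (x : R), ex_derive_n f n x.

(* Laplace-Beltrami operator of the model metric dr^2 + psi(r)^2 dω^2 (dimension N)
   applied to a radial function Phi, evaluated at distance r from the pole:
   Δ_g Φ = Φ'' + (N-1) ψ'/ψ Φ'. *)
Definition lap_rad (N : nat) (psi Phi : R -> R) (r : R) : R :=
  Derive_n Phi 2 r + (INR N - 1) * (Derive psi r / psi r) * Derive Phi r.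

Definition K_rad (psi : R -> R) (r : R) : R := - (Derive_n psi 2 r / psi r).

Definition H_tan (psi : R -> R) (r : R) : R :=
  - ((Derive psi r ^ 2 - 1) / psi r ^ 2).

(** The model Laplacian only involves [Phi'/Phi] and [Phi''/Phi], and for
    [Phi = exp h] these are [h'] and [h'' + h'^2]; with
    [h = alpha * ln (psi / r)] both are explicit in [psi], [psi'], [psi''] and
    [1/r], after which the first identity is a rational identity.  The second
    identity is the first one at [alpha = -(N-1)/2], where the coefficient of
    [psi'/(r psi)] vanishes. *)

From Stdlib Require Import Reals Lra.
From Coquelicot Require Import Coquelicot.
Open Scope R_scope.

Lemma Derive_exp_comp (h : R -> R) (r : R) :
  ex_derive h r -> Derive (fun s => exp (h s)) r = Derive h r * exp (h r).
Proof.
intros Dh. apply is_derive_unique. auto_derive; [exact Dh | rewrite Rmult_1_l; reflexivity].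
Qed.

Lemma Derive_2_exp_comp (h : R -> R) (r : R) :
  locally r (fun s => ex_derive h s) -> ex_derive (Derive h) r ->
  Derive_n (fun s => exp (h s)) 2 r = (Derive_n h 2 r + Derive h r ^ 2) * exp (h r).
Proof.
intros Dh DDh.
change (Derive (Derive (fun s => exp (h s))) r
  = (Derive_n h 2 r + Derive h r ^ 2) * exp (h r)).
rewrite (Derive_ext_loc _ (fun s => Derive h s * exp (h s)) r).
- apply is_derive_unique. auto_derive.
  + split; [exact DDh | split; [exact (locally_singleton _ _ Dh) | exact I]].
  + change (Derive_n h 2 r) with (Derive (Derive h) r).
    change (fun x => h x) with h. change (fun x => Derive h x) with (Derive h). ring.
- apply filter_imp with (2 := Dh). intros s Ds. exact (Derive_exp_comp h s Ds).
Qed.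

Lemma lap_rad_ext_loc (N : nat) (psi Phi1 Phi2 : R -> R) (r : R) :
  locally r (fun s => Phi1 s = Phi2 s) -> lap_rad N psi Phi1 r = lap_rad N psi Phi2 r.
Proof.
intros E. unfold lap_rad.
rewrite (Derive_n_ext_loc _ _ 2 _ E), (Derive_ext_loc _ _ _ E). reflexivity.
Qed.

Section LogRatio.

Variable psi : R -> R.
Hypothesis psi_smooth : smooth psi.
Hypothesis psi_pos : forall r, 0 < r -> 0 < psi r.

Let psi_ex_derive (x : R) : ex_derive psi x := psi_smooth 1%nat x.
Let Derive_psi_ex_derive (x : R) : ex_derive (Derive psi) x := psi_smooth 2%nat x.

Definition log_ratio (alpha s : R) : R := alpha * ln (psi s / s).

Lemma Derive_log_ratio (alpha s : R) :
  0 < s -> Derive (log_ratio alpha) s = alpha * (Derive psi s / psi s - 1 / s).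
Proof.
intros Hs. pose proof (psi_pos s Hs) as Hps.
apply is_derive_unique. unfold log_ratio. auto_derive.
- repeat split; [exact (psi_ex_derive s) | lra |].
  apply Rdiv_lt_0_compat; assumption.
- change (fun x => psi x) with psi. field. lra.
Qed.

Lemma Derive_2_log_ratio (alpha r : R) :
  0 < r ->
  Derive_n (log_ratio alpha) 2 r
  = alpha * (Derive_n psi 2 r / psi r - (Derive psi r / psi r) ^ 2 + 1 / r ^ 2).
Proof.
intros Hr. pose proof (psi_pos r Hr) as Hpr.
change (Derive (Derive (log_ratio alpha)) r
  = alpha * (Derive (Derive psi) r / psi r - (Derive psi r / psi r) ^ 2 + 1 / r ^ 2)).
rewrite (Derive_ext_loc _ (fun s => alpha * (Derive psi s / psi s - 1 / s)) r).
- apply is_derive_unique. auto_derive.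
  + repeat split; [exact (Derive_psi_ex_derive r) | exact (psi_ex_derive r) | lra | lra].
  + change (fun x => psi x) with psi. change (fun x => Derive psi x) with (Derive psi).
    field. lra.
- apply filter_imp with (2 := open_gt 0 r Hr). exact (Derive_log_ratio alpha).
Qed.

Lemma ex_derive_log_ratio (alpha s : R) : 0 < s -> ex_derive (log_ratio alpha) s.
Proof.
intros Hs. pose proof (psi_pos s Hs) as Hps. unfold log_ratio. auto_derive.
repeat split; [exact (psi_ex_derive s) | lra |].
apply Rdiv_lt_0_compat; assumption.
Qed.

Lemma ex_derive_Derive_log_ratio (alpha r : R) :
  0 < r -> ex_derive (Derive (log_ratio alpha)) r.
Proof.
intros Hr. pose proof (psi_pos r Hr) as Hpr.
apply (ex_derive_ext_loc (fun s => alpha * (Derive psi s / psi s - 1 / s))).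
- apply filter_imp with (2 := open_gt 0 r Hr). intros s Hs.
  symmetry. exact (Derive_log_ratio alpha s Hs).
- auto_derive. repeat split; [exact (Derive_psi_ex_derive r) | exact (psi_ex_derive r) | lra | lra].
Qed.

Lemma lap_rad_power_ratio (N : nat) (alpha r : R) :
  0 < r ->
  lap_rad N psi (fun s => Rpower (psi s / s) alpha) r
  = alpha * (Derive_n psi 2 r / psi r - (Derive psi r / psi r) ^ 2 + 1 / r ^ 2
             + (alpha * (Derive psi r / psi r - 1 / r) + (INR N - 1) * (Derive psi r / psi r))
               * (Derive psi r / psi r - 1 / r))
    * Rpower (psi r / r) alpha.
Proof.
intros Hr.
assert (Dl : locally r (fun s => ex_derive (log_ratio alpha) s)).
{ apply filter_imp with (2 := open_gt 0 r Hr). exact (ex_derive_log_ratio alpha). }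
change (fun s => Rpower (psi s / s) alpha) with (fun s => exp (log_ratio alpha s)).
unfold lap_rad.
rewrite (Derive_2_exp_comp _ r Dl (ex_derive_Derive_log_ratio alpha r Hr)),
  (Derive_exp_comp _ r (locally_singleton _ _ Dl)),
  (Derive_2_log_ratio alpha r Hr), (Derive_log_ratio alpha r Hr).
change (exp (log_ratio alpha r)) with (Rpower (psi r / r) alpha).
ring.
Qed.

End LogRatio.

Lemma Rpower_div_swap (x y a : R) :
  0 < x -> 0 < y -> Rpower (x / y) a = Rpower (y / x) (- a).
Proof.
intros Hx Hy. unfold Rpower.
replace (x / y) with (/ (y / x)) by (field; lra).
rewrite ln_Rinv; [f_equal; ring | apply Rdiv_lt_0_compat; assumption].
Qed.

Theorem lemma4p2 (N : nat) (psi : R -> R) :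
  (2 <= N)%nat ->
  smooth psi ->
  (forall r, 0 < r -> 0 < psi r) ->
  psi 0 = 0 -> Derive psi 0 = 1 -> Derive_n psi 2 0 = 0 ->
  (forall (alpha r : R), 0 < r ->
     let Phi := fun s : R => Rpower (psi s / s) alpha in
     - lap_rad N psi Phi r
       - alpha * (K_rad psi r + (alpha - 2 + INR N) * H_tan psi r) * Phi r
     = - alpha * (alpha - 2 + INR N) * (Phi r / psi r ^ 2)
       - alpha * (alpha + 1) / r ^ 2 * Phi r
       + (2 * alpha ^ 2 + alpha * (INR N - 1)) / r * (Derive psi r / psi r) * Phi r)
  /\
  (forall r : R, 0 < r ->
     let Phi := fun s : R => Rpower (s / psi s) ((INR N - 1) / 2) in
     - lap_rad N psi Phi r
       + (INR N - 1) / 4 * (2 * K_rad psi r + (INR N - 3) * H_tan psi r) * Phi r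
     = (INR N - 1) * (INR N - 3) / 4 * Phi r * (1 / psi r ^ 2 - 1 / r ^ 2)).
Proof.
intros _ Hsm Hpos _ _ _.
split.
- intros alpha r Hr Phi. pose proof (Hpos r Hr).
  unfold Phi. rewrite (lap_rad_power_ratio psi Hsm Hpos N alpha r Hr).
  unfold K_rad, H_tan. field. lra.
- intros r Hr Phi. pose proof (Hpos r Hr).
  assert (Eloc : locally r (fun s => Phi s = Rpower (psi s / s) (- ((INR N - 1) / 2)))).
  { apply filter_imp with (2 := open_gt 0 r Hr). intros s Hs.
    exact (Rpower_div_swap _ _ _ Hs (Hpos s Hs)). }
  rewrite (lap_rad_ext_loc N psi _ _ r Eloc), (locally_singleton _ _ Eloc).
  rewrite (lap_rad_power_ratio psi Hsm Hpos N _ r Hr).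
  unfold K_rad, H_tan. field. lra.
Qed.
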